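(* Let $\mathcal{M}=(S,A,\delta)$ be a finite fuzzy transition system and $\gamma\in(0,1)$. For any functions $d,d':S\times S\to[0,1]$, \[\|\Delta(d)-\Delta(d')\|\le\gamma\cdot\|d-d'\|,\] where $\|e\|=\max_{s,t\in S}|e(s,t)|$.
   Context: A fuzzy set on a finite set $X$ is a map $\mu:X\to[0,1]$; $\mathcal{F}(X)$ is the set of fuzzy sets on $X$; $\mu(U)=\max_{x\in U}\mu(x)$. A fuzzy transition system is $\mathcal{M}=(S,A,\delta)$ with $S,A$ finite and $\delta:S\times A\to\mathcal{P}(\mathcal{F}(S))$, each $\delta(s,a)$ finite. For $d:S\times S\to[0,1]$, the lifting is: $\hat d(\mu,\eta)=1$ if $\mu(S)\ne\eta(S)$, and otherwise $\hat d(\mu,\eta)$ is the minimum of $\max_{u,v}\min(d(u,v),x_{uv})$ over $x_{uv}\ge0$ with $\max_v x_{uv}=\mu(u)$ for all $u$ and $\max_u x_{uv}=\eta(v)$ for all $v$. For finite $Z\subseteq\mathcal{F}(S)$: $\hat d(\mu,Z)=\min_{\eta\in Z}\hat d(\mu,\eta)$ if $Z\ne\emptyset$, else $1$. Hausdorff distance: $H_{\hat d}(\emptyset,\emptyset)=0$, otherwise $H_{\hat d}(Y,Z)=\max(\max_{\mu\in Y}\hat d(\mu,Z),\max_{\eta\in Z}\hat d(\eta,Y))$. With discounting factor $\gamma$, $\Delta(d)(s,t)=\gamma\cdot\max_{a\in A}H_{\hat d}(\delta(s,a),\delta(t,a))$. *)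

From HB Require Import structures.
From mathcomp Require Import all_boot all_order all_algebra.
From mathcomp Require Import boolp classical_sets reals.
Set Implicit Arguments. Unset Strict Implicit. Unset Printing Implicit Defensive.
Import Order.TTheory GRing.Theory Num.Theory.
Local Open Scope ring_scope.
Local Open Scope classical_set_scope.

Section FuzzyDefs.
Variables (R : realType) (S A : finType).

(* fuzzy sets on S: maps S -> [0,1] (the [0,1] constraint is a hypothesis
   where needed). mu(S) = max_{x in S} mu x. *)
Definition fheight (mu : {ffun S -> R}) : R := \big[Num.max/0]_(x : S) mu x.

Definition coupling_values (d : S -> S -> R) (mu eta : {ffun S -> R}) : set R :=
  [set r | exists x : S -> S -> R,
      (forall u v, 0 <= x u v) /\
      (forall u, \big[Num.max/0]_(v : S) x u v = mu u) /\
      (forall v, \big[Num.max/0]_(u : S) x u v = eta v) /\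
      r = \big[Num.max/0]_(u : S) \big[Num.max/0]_(v : S) Num.min (d u v) (x u v)].

Definition lift (d : S -> S -> R) (mu eta : {ffun S -> R}) : R :=
  if fheight mu != fheight eta then 1 else inf (coupling_values d mu eta).

Definition lift_set (d : S -> S -> R) (mu : {ffun S -> R})
    (Z : seq {ffun S -> R}) : R :=
  match Z with
  | [::] => 1
  | eta :: Z' => \big[Num.min/lift d mu eta]_(e <- Z') lift d mu e
  end.

Definition hausdorff (d : S -> S -> R) (Y Z : seq {ffun S -> R}) : R :=
  if (Y == [::]) && (Z == [::]) then 0
  else Num.max (\big[Num.max/0]_(mu <- Y) lift_set d mu Z)
               (\big[Num.max/0]_(eta <- Z) lift_set d eta Y).

Definition Delta (delta : S -> A -> seq {ffun S -> R}) (gamma : R)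
    (d : S -> S -> R) : S -> S -> R :=
  fun s t => gamma * \big[Num.max/0]_(a : A) hausdorff d (delta s a) (delta t a).

Definition supnorm (e : S -> S -> R) : R :=
  \big[Num.max/0]_(s : S) \big[Num.max/0]_(t : S) `|e s t|.

End FuzzyDefs.

(* Every ingredient of Delta is nonexpansive for the sup norm: if two families
   of reals differ pointwise by at most e, so do their (finite) maxima, minima,
   and their infima over a common index set.  The lifting, its extension to
   finite sets and the Hausdorff distance are built from d by these operations
   only (their case distinctions do not depend on d), so they move by at most
   ||d - d'||, and Delta multiplies that by gamma. *)
From Pilot Require Import Defs.
From HB Require Import structures.
From mathcomp Require Import all_boot all_order all_algebra.
From mathcomp Require Import boolp classical_sets reals.
From mathcomp Require Import lra.
Set Implicit Arguments. Unset Strict Implicit. Unset Printing Implicit Defensive.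
Import Order.TTheory GRing.Theory Num.Theory.
Local Open Scope ring_scope.
Local Open Scope classical_set_scope.

Section Nonexpansive.
Variables (R : realType) (e : R).

Lemma ler_dist_max (a b c d : R) : `|a - b| <= e -> `|c - d| <= e ->
  `|Num.max a c - Num.max b d| <= e.
Proof.
rewrite !ler_norml => /andP[? ?] /andP[? ?].
by have [?|?] := leP a c; have [?|?] := leP b d; apply/andP; split; lra.
Qed.

Lemma ler_dist_min (a b c d : R) : `|a - b| <= e -> `|c - d| <= e ->
  `|Num.min a c - Num.min b d| <= e.
Proof.
rewrite !ler_norml => /andP[? ?] /andP[? ?].
by have [?|?] := leP a c; have [?|?] := leP b d; apply/andP; split; lra.
Qed.

Lemma ler_dist_bigmax (I : Type) (r : seq I) (x y : R) (F G : I -> R) :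
  `|x - y| <= e -> (forall i, `|F i - G i| <= e) ->
  `|\big[Num.max/x]_(i <- r) F i - \big[Num.max/y]_(i <- r) G i| <= e.
Proof.
move=> exy eFG; apply: (big_ind2 (fun a b => `|a - b| <= e)) => // *.
exact: ler_dist_max.
Qed.

Lemma ler_dist_bigmin (I : Type) (r : seq I) (x y : R) (F G : I -> R) :
  `|x - y| <= e -> (forall i, `|F i - G i| <= e) ->
  `|\big[Num.min/x]_(i <- r) F i - \big[Num.min/y]_(i <- r) G i| <= e.
Proof.
move=> exy eFG; apply: (big_ind2 (fun a b => `|a - b| <= e)) => // *.
exact: ler_dist_min.
Qed.

Lemma ler_inf_image (T : Type) (X : set T) (f g : T -> R) :
  X !=set0 -> has_lbound (f @` X) -> (forall x, X x -> f x <= g x + e) ->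
  inf (f @` X) <= inf (g @` X) + e.
Proof.
move=> [x0 Xx0] lbf fg; rewrite -lerBlDr.
apply: lb_le_inf => [|_ [x Xx <-]]; first by exists (g x0), x0.
rewrite lerBlDr; apply: le_trans (fg x Xx).
by apply: ge_inf => //; exists x.
Qed.

Lemma ler_dist_inf_image (T : Type) (X : set T) (f g : T -> R) :
  0 <= e -> has_lbound (f @` X) -> has_lbound (g @` X) ->
  (forall x, X x -> `|f x - g x| <= e) ->
  `|inf (f @` X) - inf (g @` X)| <= e.
Proof.
move=> e0 lbf lbg efg; have [->|X0] := eqVneq X set0.
  by rewrite !image_set0 subrr normr0.
have {}X0 : X !=set0 by apply/set0P.
have fg x : X x -> f x <= g x + e.
  by move/efg; rewrite ler_norml => /andP[? ?]; lra.
have gf x : X x -> g x <= f x + e.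
  by move/efg; rewrite ler_norml => /andP[? ?]; lra.
have := ler_inf_image X0 lbf fg; have := ler_inf_image X0 lbg gf.
by rewrite ler_norml => ? ?; apply/andP; split; lra.
Qed.

End Nonexpansive.

Section FuzzyLifting.
Variables (R : realType) (S A : finType).

Definition couplings (mu eta : {ffun S -> R}) : set (S -> S -> R) :=
  [set x | (forall u v, 0 <= x u v) /\
           (forall u, \big[Num.max/0]_(v : S) x u v = mu u) /\
           (forall v, \big[Num.max/0]_(u : S) x u v = eta v)].

Definition coupling_cost (d : S -> S -> R) (x : S -> S -> R) : R :=
  \big[Num.max/0]_(u : S) \big[Num.max/0]_(v : S) Num.min (d u v) (x u v).

Lemma coupling_valuesE (d : S -> S -> R) (mu eta : {ffun S -> R}) :
  coupling_values d mu eta = coupling_cost d @` couplings mu eta.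
Proof.
by apply/seteqP; split => [r [x [? [? [? ->]]]] | _ [x [? [? ?]] <-]]; exists x.
Qed.

Lemma coupling_cost_ge0 (d : S -> S -> R) (x : S -> S -> R) :
  0 <= coupling_cost d x.
Proof. exact: bigmax_ge_id. Qed.

Variables (d d' : S -> S -> R) (e : R).
Hypotheses (e_ge0 : 0 <= e) (dd'_le : forall u v, `|d u v - d' u v| <= e).

Let dist00_le : `|0 - 0 : R| <= e. Proof. by rewrite subrr normr0. Qed.

Lemma ler_dist_lift (mu eta : {ffun S -> R}) :
  `|Defs.lift d mu eta - Defs.lift d' mu eta| <= e.
Proof.
rewrite /Defs.lift; case: ifP => _; first by rewrite subrr normr0.
have lb_cost d0 : has_lbound (coupling_cost d0 @` couplings mu eta).
  by exists 0 => _ [x _ <-]; exact: coupling_cost_ge0.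
rewrite !coupling_valuesE; apply: ler_dist_inf_image => // x _.
apply: ler_dist_bigmax => // u; apply: ler_dist_bigmax => // v.
by apply: ler_dist_min; rewrite // subrr normr0.
Qed.

Lemma ler_dist_lift_set (mu : {ffun S -> R}) (Z : seq {ffun S -> R}) :
  `|lift_set d mu Z - lift_set d' mu Z| <= e.
Proof.
case: Z => [|eta Z] /=; first by rewrite subrr normr0.
by apply: ler_dist_bigmin => //; exact: ler_dist_lift.
Qed.

Lemma ler_dist_hausdorff (Y Z : seq {ffun S -> R}) :
  `|hausdorff d Y Z - hausdorff d' Y Z| <= e.
Proof.
rewrite /hausdorff; case: ifP => _; first by rewrite subrr normr0.
by apply: ler_dist_max; apply: ler_dist_bigmax => // mu; exact: ler_dist_lift_set.
Qed.

Lemma ler_dist_Delta (delta : S -> A -> seq {ffun S -> R}) (gamma : R) (s t : S) :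
  0 <= gamma -> `|Delta delta gamma d s t - Delta delta gamma d' s t| <= gamma * e.
Proof.
move=> gamma_ge0; rewrite /Delta -mulrBr normrM ger0_norm // ler_wpM2l //.
by apply: ler_dist_bigmax => // a; exact: ler_dist_hausdorff.
Qed.

End FuzzyLifting.

Section Supnorm.
Variables (R : realType) (S : finType) (f : S -> S -> R).

Lemma supnorm_ge0 : 0 <= supnorm f.
Proof. exact: bigmax_ge_id. Qed.

Lemma ler_norm_supnorm (s t : S) : `|f s t| <= supnorm f.
Proof.
apply: le_trans (le_bigmax _ _ s).
exact: (le_bigmax _ (fun t => `|f s t|) t).
Qed.

Lemma supnorm_le (c : R) : 0 <= c -> (forall s t, `|f s t| <= c) -> supnorm f <= c.
Proof.
by move=> c_ge0 fc; apply: bigmax_le => // s _; apply: bigmax_le => // t _.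
Qed.

End Supnorm.

Theorem lemma6 (R : realType) (S A : finType)
    (delta : S -> A -> seq {ffun S -> R})
    (Hdelta : forall s a mu, mu \in delta s a -> forall x, 0 <= mu x <= 1)
    (gamma : R) (Hgamma : 0 < gamma < 1)
    (d d' : S -> S -> R)
    (Hd : forall s t, 0 <= d s t <= 1) (Hd' : forall s t, 0 <= d' s t <= 1) :
  supnorm (fun s t => Delta delta gamma d s t - Delta delta gamma d' s t)
    <= gamma * supnorm (fun s t => d s t - d' s t).
Proof.
have gamma_ge0 : 0 <= gamma by case/andP: Hgamma => /ltW.
have dd'_ge0 := supnorm_ge0 (fun s t => d s t - d' s t).
apply: supnorm_le => [|s t]; first exact: mulr_ge0.
apply: ler_dist_Delta => // u v.
exact: (ler_norm_supnorm (fun s t => d s t - d' s t)).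
Qed.
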